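(* Consider an $N$-player quadratic game with costs $f_1,\ldots,f_N$, step sizes $\gamma_1,\ldots,\gamma_N>0$, and the associated matrix $W\in\mathbb{R}^{n\times n}$ and disturbed gradient-based learning dynamics described in the context, in which player $i$'s gradient is corrupted by an arbitrary disturbance. For $\ell\in[N]$ let $\mathcal{S}(\ell)=\{x=(x_1,\ldots,x_N)\in\mathbb{R}^n : x_m=0 \text{ for all } m\neq \ell\}$, and for a subspace $\mathcal{M}\subseteq\mathbb{R}^n$ let $\mathcal{M}^\perp=\{x\in\mathbb{R}^n : x^\top\tilde x=0\ \forall \tilde x\in\mathcal{M}\}$. For a player $j\neq i$, the following statements are equivalent: (i) Player $j$ is disturbance decoupled from player $i$. (ii) $W^k v\in\mathcal{S}(j)^\perp$ for all $v\in\mathcal{S}(i)$ and all integers $0\le k<n$. (iii) $\mathrm{im}(W^kE)\subseteq\mathrm{im}(Y)$ for all integers $0\le k<n$, where $E\in\mathbb{R}^{n\times n_i}$ and $Y\in\mathbb{R}^{n\times(n-n_j)}$ are any matrices with $\mathrm{im}(E)=\mathcal{S}(i)$ and $\mathrm{im}(Y)=\mathcal{S}(j)^\perp$.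
   Context: There are $N$ players, indexed by $[N]=\{1,\ldots,N\}$; player $\ell$ has action $x_\ell\in\mathbb{R}^{n_\ell}$, $n=\sum_{\ell=1}^N n_\ell$, and $x=(x_1,\ldots,x_N)\in\mathbb{R}^n$ is the joint action. A quadratic game has costs $f_\ell(x)=\tfrac12 x_\ell^\top P_\ell x_\ell + x_\ell^\top\big(\sum_{m\neq \ell}P_{\ell m}x_m + r_\ell\big)$ with $P_\ell\in\mathbb{R}^{n_\ell\times n_\ell}$ symmetric, $P_{\ell m}\in\mathbb{R}^{n_\ell\times n_m}$, $r_\ell\in\mathbb{R}^{n_\ell}$. Each player $\ell$ has step size $\gamma_\ell>0$ and updates $x_\ell^{k+1}=x_\ell^k-\gamma_\ell\big(D_\ell f_\ell(x^k)+d_\ell^k\big)$, where $D_\ell f_\ell=\partial f_\ell/\partial x_\ell$ and $d_\ell^k\in\mathbb{R}^{n_\ell}$ is an arbitrary additive disturbance. Let $W\in\mathbb{R}^{n\times n}$ be the block matrix with blocks $W_{\ell\ell}=I_{n_\ell}-\gamma_\ell P_\ell$ and $W_{\ell m}=-\gamma_\ell P_{\ell m}$ ($\ell\neq m$), let $\Gamma=\mathrm{blkdiag}(\gamma_1 I_{n_1},\ldots,\gamma_N I_{n_N})$ and $\bar r=(r_1,\ldots,r_N)\in\mathbb{R}^n$. Let $\mathcal{D}_i=\{d=(d_1,\ldots,d_N)\in\mathbb{R}^n : d_m=0\ \forall m\neq i\}$ (disturbance only in player $i$'s gradient). The uncorrupted and corrupted dynamics are $x^{k+1}=Wx^k-\Gamma\bar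 r$ and $y^{k+1}=Wy^k-\Gamma\bar r-\Gamma d^k$. Player $j\neq i$ is said to be disturbance decoupled from player $i$ if for every initial joint action $x^0$, taking $y^0=x^0$, one has $y_j^k=x_j^k$ for all $k\ge 0$ and every disturbance sequence $(d^k)_{k\ge0}$ with $d^k\in\mathcal{D}_i$ for all $k$. *)

(* Linear-algebra statement over an ordered field R
   (the paper's R is an instance: any R : realFieldType). *)
From HB Require Import structures.
From mathcomp Require Import all_boot all_order all_algebra.
Set Implicit Arguments. Unset Strict Implicit. Unset Printing Implicit Defensive.
Import Order.TTheory GRing.Theory Num.Theory.
Local Open Scope ring_scope.

Section QuadGame.
Variables (R : realFieldType) (N : nat) (nl : 'I_N -> nat).

(* total dimension n = sum_l n_l; joint actions are column vectors 'cV_n,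
   split into player blocks with submxcol. *)
Definition dimn := (\sum_(l < N) nl l)%N.

(* Game data: Q l l = P_l, Q l m = P_{l m} (l <> m). *)
Definition Pfull (Q : forall l m : 'I_N, 'M[R]_(nl l, nl m)) : 'M[R]_dimn :=
  \mxblock_(l < N, m < N) Q l m.

Definition Gam (gamma : 'I_N -> R) : 'M[R]_dimn := \mxdiag_(l < N) (gamma l)%:M.

Definition Wmx (gamma : 'I_N -> R) (Q : forall l m : 'I_N, 'M[R]_(nl l, nl m))
  : 'M[R]_dimn := 1%:M - Gam gamma *m Pfull Q.

Definition rbar (r : forall l : 'I_N, 'cV[R]_(nl l)) : 'cV[R]_dimn :=
  \mxcol_(l < N) r l.

Fixpoint xtraj (W G : 'M[R]_dimn) (rb : 'cV[R]_dimn) (x0 : 'cV[R]_dimn) (k : nat)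
  : 'cV[R]_dimn :=
  match k with
  | 0 => x0
  | k'.+1 => W *m xtraj W G rb x0 k' - G *m rb
  end.

Fixpoint ytraj (W G : 'M[R]_dimn) (rb : 'cV[R]_dimn) (d : nat -> 'cV[R]_dimn)
  (y0 : 'cV[R]_dimn) (k : nat) : 'cV[R]_dimn :=
  match k with
  | 0 => y0
  | k'.+1 => W *m ytraj W G rb d y0 k' - G *m rb - G *m d k'
  end.

(* S(l) = { x | x_m = 0 for all m <> l }  (also D_l, the disturbance set) *)
Definition Sset (l : 'I_N) (x : 'cV[R]_dimn) : Prop :=
  forall m : 'I_N, m != l -> submxcol x m = 0.

Definition perp (M : 'cV[R]_dimn -> Prop) (x : 'cV[R]_dimn) : Prop :=
  forall xt, M xt -> x^T *m xt = 0.

Definition inIm p (A : 'M[R]_(dimn, p)) (x : 'cV[R]_dimn) : Prop :=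
  exists u : 'cV[R]_p, x = A *m u.

Definition dist_decoupled (gamma : 'I_N -> R)
  (Q : forall l m : 'I_N, 'M[R]_(nl l, nl m)) (r : forall l : 'I_N, 'cV[R]_(nl l))
  (i j : 'I_N) : Prop :=
  forall (x0 : 'cV[R]_dimn) (d : nat -> 'cV[R]_dimn),
    (forall k, Sset i (d k)) ->
    forall k, submxcol (ytraj (Wmx gamma Q) (Gam gamma) (rbar r) d x0 k) j
              = submxcol (xtraj (Wmx gamma Q) (Gam gamma) (rbar r) x0 k) j.

End QuadGame.

From mathcomp Require Import all_boot all_order all_algebra.
Import GRing.Theory Num.Theory.
Local Open Scope ring_scope.

(* The error e^k = y^k - x^k obeys e^0 = 0 and e^(k+1) = W e^k - Gamma d^k, and
   Gamma acts on S(i) as the nonzero scalar gamma_i.  So the j-block of every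
   e^k vanishes when the j-block of W^k v vanishes for all v in S(i) and all k;
   conversely, the impulse d^0 = v / gamma_i, d^(k+1) = 0 yields
   e^(k+1) = - W^k v.  By Cayley-Hamilton the powers W^k with k < n span all
   powers of W; the j-block of a vector vanishes iff it is orthogonal to S(j)
   (test it against its own j-block); and (iii) is (ii) read through E and Y. *)

Lemma mxpow_span {F : fieldType} {n} (A : 'M[F]_n) k :
  exists c : 'I_n -> F, A ^+ k = \sum_(t < n) c t *: A ^+ t.
Proof.
case: n A => [|n] A; first by exists (fun _ => 0); apply/matrixP => -[].
pose p := 'X^k %% char_poly A.
exists (fun t => p`_t).
have char_neq0 : char_poly A != 0 by rewrite -size_poly_eq0 size_char_poly.
have size_p : (size p <= n.+1)%N.
  by rewrite -ltnS -(size_char_poly A) ltn_modpN0.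
have -> : A ^+ k = horner_mx A p.
  rewrite -[A in A ^+ k]horner_mx_X -rmorphXn /= (divp_eq 'X^k (char_poly A)).
  by rewrite rmorphD rmorphM /= Cayley_Hamilton mulr0 add0r.
have {1}-> : p = \poly_(t < n.+1) p`_t.
  apply/polyP => t; rewrite coef_poly; case: ltnP => // le_n_t.
  by rewrite nth_default // (leq_trans size_p).
rewrite poly_def rmorph_sum /=; apply: eq_bigr => t _.
by rewrite horner_mxZ rmorphXn /= horner_mx_X.
Qed.

Lemma submxcolZ {R : pzRingType} {N} {p_ : 'I_N -> nat} {m}
    (a : R) (x : 'M[R]_(\sum_l p_ l, m)) l :
  submxcol (a *: x) l = a *: submxcol x l.
Proof. by apply/matrixP => u w; rewrite !mxE. Qed.

Lemma submxcol_mxpow_eq0 {F : fieldType} {N} {p_ : 'I_N -> nat} {m}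
    (A : 'M[F]_(\sum_l p_ l)) (v : 'M[F]_(\sum_l p_ l, m)) j :
    (forall t, (t < \sum_l p_ l)%N -> submxcol (A ^+ t *m v) j = 0) ->
  forall k, submxcol (A ^+ k *m v) j = 0.
Proof.
move=> low_eq0 k; have [c ->] := mxpow_span A k.
rewrite mulmx_suml submxcol_sum big1 // => t _.
by rewrite -scalemxAl submxcolZ low_eq0 ?scaler0.
Qed.

Lemma tr_mul_mxcol {R : pzRingType} {N} {p_ : 'I_N -> nat}
    (x y : 'cV[R]_(\sum_l p_ l)) :
  x^T *m y = \sum_l (submxcol x l)^T *m submxcol y l.
Proof.
by rewrite -{1}[x]submxcolK -{1}[y]submxcolK tr_mxcol mul_mxrow_mxcol.
Qed.

Lemma trmx_mul_self_eq0 {R : realDomainType} {n} (x : 'cV[R]_n) :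
  x^T *m x = 0 -> x = 0.
Proof.
move=> /matrixP/(_ ord0 ord0); rewrite !mxE => dot_eq0.
have sum_sq_eq0 : \sum_t x t ord0 ^+ 2 = 0.
  by rewrite -[RHS]dot_eq0; apply: eq_bigr => t _; rewrite mxE expr2.
apply/matrixP => u w; rewrite (ord1 w) mxE.
apply/eqP; rewrite -sqrf_eq0; apply/eqP.
exact: (psumr_eq0P (fun t _ => sqr_ge0 (x t ord0)) sum_sq_eq0).
Qed.

Section QuadraticGame.
Context {R : realFieldType} {N : nat} {nl : 'I_N -> nat}.
Local Notation n := (dimn nl).

Lemma SsetZ {l} (a : R) {v : 'cV[R]_n} : Sset l v -> Sset l (a *: v).
Proof. by move=> v_l m m_neq_l; rewrite submxcolZ v_l ?scaler0. Qed.

Lemma mul_Gam_Sset (gamma : 'I_N -> R) {l} {v : 'cV[R]_n} :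
  Sset l v -> Gam nl gamma *m v = gamma l *: v.
Proof.
move=> v_l; rewrite /Gam -[v]submxcolK mul_mxdiag_mxcol.
apply/mxcolP => m; rewrite submxcolZ !mxcolK mul_scalar_mx.
by have [-> // | m_neq_l] := eqVneq m l; rewrite v_l ?scaler0.
Qed.

Lemma perp_SsetE l (x : 'cV[R]_n) :
  perp (@Sset R N nl l) x <-> submxcol x l = 0.
Proof.
split=> [x_perp | x_l0 y y_l]; last first.
  rewrite tr_mul_mxcol (bigD1 l) //= x_l0 trmx0 mul0mx add0r.
  by rewrite big1 // => m m_neq_l; rewrite y_l ?mulmx0.
pose y : 'cV[R]_n := \mxcol_m (if m == l then submxcol x m else 0).
have y_l : Sset l y by move=> m m_neq_l; rewrite mxcolK (negbTE m_neq_l).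
apply: trmx_mul_self_eq0; have := x_perp y y_l.
rewrite tr_mul_mxcol (bigD1 l) //= big1 => [|m m_neq_l]; last first.
  by rewrite mxcolK (negbTE m_neq_l) mulmx0.
by rewrite addr0 mxcolK eqxx.
Qed.

Lemma inIm_mul_subP {p q} {E : 'M[R]_(n, p)} {Y : 'M[R]_(n, q)}
    {S T : 'cV[R]_n -> Prop} :
    (forall x, inIm E x <-> S x) -> (forall x, inIm Y x <-> T x) ->
  forall A : 'M[R]_n,
  (forall v, S v -> T (A *m v)) <-> (forall x, inIm (A *m E) x -> inIm Y x).
Proof.
move=> imE imY A; split=> [AS_T _ [u ->] | AE_Y v /imE [u ->]].
  by apply/imY; rewrite -mulmxA; apply/AS_T/imE; exists u.
by apply/imY/AE_Y; exists u; rewrite mulmxA.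
Qed.

Section Trajectories.
Variables (W G : 'M[R]_n) (rb : 'cV[R]_n).

Local Notation err d x0 k := (ytraj W G rb d x0 k - xtraj W G rb x0 k).

Lemma traj_errS d x0 k : err d x0 k.+1 = W *m err d x0 k - G *m d k.
Proof.
by rewrite /= mulmxBr opprB !addrA (addrAC _ (- (G *m d k))) subrK addrAC.
Qed.

Lemma traj_err_impulse (u x0 : 'cV[R]_n) k :
  err (fun t => if t is 0 then u else 0) x0 k.+1 = - (W ^+ k *m G *m u).
Proof.
elim: k => [|k IHk]; rewrite traj_errS.
  by rewrite /= subrr mulmx0 sub0r expr0 mul1mx.
by rewrite IHk mulmx0 subr0 mulmxN !mulmxA -[W *m _]exprS.
Qed.

Lemma traj_err_block_eq0 l d x0 :
    (forall t k, submxcol (W ^+ t *m G *m d k) l = 0) ->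
  forall k, submxcol (ytraj W G rb d x0 k) l = submxcol (xtraj W G rb x0 k) l.
Proof.
move=> WGd_l0 k; apply/eqP; rewrite -subr_eq0 -submxcolB; apply/eqP.
suff: forall t, submxcol (W ^+ t *m err d x0 k) l = 0.
  by move/(_ 0%N); rewrite mul1mx.
elim: k => [|k IHk] t; first by rewrite /= subrr mulmx0 submxcol0.
rewrite traj_errS mulmxBr submxcolB mulmxA -[_ *m W]exprSr IHk.
by rewrite mulmxA WGd_l0 subr0.
Qed.

End Trajectories.

Lemma dist_decoupledP (gamma : 'I_N -> R) (Q : forall l m, 'M[R]_(nl l, nl m))
    (r : forall l, 'cV[R]_(nl l)) i j :
    gamma i != 0 ->
  dist_decoupled gamma Q r i j <->
  (forall v : 'cV[R]_n, Sset i v ->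
     forall k, submxcol (Wmx gamma Q ^+ k *m v) j = 0).
Proof.
move=> gamma_i_neq0; split=> [dec v v_i k | W_i_j x0 d d_i].
  pose d t : 'cV[R]_n := if t is 0 then (gamma i)^-1 *: v else 0.
  have d_i t : Sset i (d t).
    by case: t => [|t]; [exact: SsetZ | move=> m _; rewrite submxcol0].
  have /eqP := dec 0 d d_i k.+1; rewrite -subr_eq0 -submxcolB traj_err_impulse.
  rewrite submxcolN oppr_eq0 -mulmxA (mul_Gam_Sset _ (SsetZ _ v_i)).
  by rewrite scalerA mulfV // scale1r => /eqP.
apply: traj_err_block_eq0 => t k.
rewrite -mulmxA (mul_Gam_Sset _ (d_i k)) -scalemxAr submxcolZ.
by rewrite (W_i_j _ (d_i k)) scaler0.
Qed.

End QuadraticGame.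

Theorem proposition1 (R : realFieldType) (N : nat) (nl : 'I_N -> nat)
  (Q : forall l m : 'I_N, 'M[R]_(nl l, nl m))
  (r : forall l : 'I_N, 'cV[R]_(nl l))
  (gamma : 'I_N -> R)
  (hsym : forall l : 'I_N, (Q l l)^T = Q l l)
  (hgamma : forall l : 'I_N, 0 < gamma l)
  (i j : 'I_N) (hij : j != i)
  (E : 'M[R]_(dimn nl, nl i)) (Y : 'M[R]_(dimn nl, dimn nl - nl j))
  (hE : forall x, inIm E x <-> Sset i x)
  (hY : forall x, inIm Y x <-> perp (@Sset R N nl j) x) :
  let W := Wmx gamma Q in
  (dist_decoupled gamma Q r i j <->
     (forall v, Sset i v -> forall k : nat, (k < dimn nl)%N ->
        perp (@Sset R N nl j) (W ^+ k *m v)))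
  /\
  (dist_decoupled gamma Q r i j <->
     (forall k : nat, (k < dimn nl)%N ->
        forall x, inIm (W ^+ k *m E) x -> inIm Y x)).
Proof.
move=> W.
have decP := dist_decoupledP gamma Q r i j (lt0r_neq0 (hgamma i)).
have low_powers :
    (forall v, Sset i v -> forall k, submxcol (W ^+ k *m v) j = 0) <->
    (forall v, Sset i v -> forall k, (k < dimn nl)%N ->
       perp (@Sset R N nl j) (W ^+ k *m v)).
  split=> W_i_j v v_i k; first by move=> _; apply/perp_SsetE/W_i_j.
  by apply: submxcol_mxpow_eq0 => t t_lt_n; apply/perp_SsetE/W_i_j.
have images :
    (forall v, Sset i v -> forall k, (k < dimn nl)%N ->
       perp (@Sset R N nl j) (W ^+ k *m v)) <->
    (forall k, (k < dimn nl)%N -> forall x, inIm (W ^+ k *m E) x -> inIm Y x).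
  split=> [W_i_j k k_lt_n | WE_Y v v_i k k_lt_n].
    by apply/(inIm_mul_subP hE hY) => v v_i; apply: W_i_j.
  by have /(inIm_mul_subP hE hY) := WE_Y k k_lt_n; apply.
split; first exact: iff_trans decP low_powers.
exact: iff_trans decP (iff_trans low_powers images).
Qed.
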